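(* Let $\bar d\ge1$, fix an index $*\in\{1,\dots,\bar d\}$, and for $\mathbf{c},\mathbf{r}\in[0,1]^{\bar d}$ define $h^C_{\mathbf{c},\mathbf{r}},h^S_{\mathbf{c},\mathbf{r}}:[0,1]^{\bar d}\to[0,1]$ by $h^C_{\mathbf{c},\mathbf{r}}(\mathbf{p})=1$ and $h^S_{\mathbf{c},\mathbf{r}}(\mathbf{p})=p_*$ if $c_i\le p_i<c_i+r_i$ for all $i$, and $h^C_{\mathbf{c},\mathbf{r}}(\mathbf{p})=h^S_{\mathbf{c},\mathbf{r}}(\mathbf{p})=0$ otherwise. Let $\mathcal{H}^C=\{h^C_{\mathbf{c},\mathbf{r}}\}$ and $\mathcal{H}^S=\{h^S_{\mathbf{c},\mathbf{r}}\}$ over all $\mathbf{c},\mathbf{r}$. Then $\operatorname{vc}(\mathcal{H}^S)\le 2\bar d$ and $\operatorname{vc}(\mathcal{H}^C)\le 2\bar d$.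
   Context: A countable set $I\subseteq[0,1]^{\bar d}$ is pseudo-shattered by a function class $\mathcal{H}$ if there is a function $g:I\to\mathbb{R}$ such that for every $J\subseteq I$ there is $h_J\in\mathcal{H}$ with $h_J(\mathbf{x})\le g(\mathbf{x})$ for $\mathbf{x}\in J$ and $h_J(\mathbf{x})>g(\mathbf{x})$ for $\mathbf{x}\in I\setminus J$. The pseudo-dimension $\operatorname{vc}(\mathcal{H})$ is the supremum of $|I|$ over sets $I$ pseudo-shattered by $\mathcal{H}$. *)

From HB Require Import structures.
From mathcomp Require Import all_boot all_order all_algebra.
From mathcomp Require Import boolp classical_sets cardinality reals.
Set Implicit Arguments. Unset Strict Implicit. Unset Printing Implicit Defensive.
Import Order.TTheory GRing.Theory Num.Theory.
Local Open Scope classical_set_scope.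
Local Open Scope ring_scope.

Section Defs.
Variable R : realType.
Variable d : nat.

Definition pt := 'rV[R]_d.

Definition unit_cube : set pt := [set p | forall i, 0 <= p ord0 i <= 1].

Definition in_box (c r p : pt) : bool :=
  [forall i, (c ord0 i <= p ord0 i) && (p ord0 i < c ord0 i + r ord0 i)].

Definition hC (c r : pt) : pt -> R := fun p => if in_box c r p then 1 else 0.
Definition hS (star : 'I_d) (c r : pt) : pt -> R :=
  fun p => if in_box c r p then p ord0 star else 0.

Definition HC : set (pt -> R) :=
  [set h | exists c r, unit_cube c /\ unit_cube r /\ h = hC c r].
Definition HS (star : 'I_d) : set (pt -> R) :=
  [set h | exists c r, unit_cube c /\ unit_cube r /\ h = hS star c r].

Definition pseudo_shattered (H : set (pt -> R)) (I : set pt) : Prop :=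
  exists g : pt -> R, forall J, J `<=` I ->
    exists2 h, H h & (forall x, J x -> h x <= g x) /\
                     (forall x, (I `\` J) x -> g x < h x).

Definition pseudo_dim_le (H : set (pt -> R)) (n : nat) : Prop :=
  forall I : set pt, I `<=` unit_cube -> countable I -> pseudo_shattered H I ->
    exists s : seq pt, [/\ uniq s, I = [set x | x \in s] & (size s <= n)%N].
End Defs.

From mathcomp Require Import all_boot all_order all_algebra.
From mathcomp Require Import finmap boolp classical_sets cardinality reals.

(* Both classes consist of functions equal to a fixed nonnegative [v] on a
   half-open box and to [0] outside.  A witness [g] of pseudo-shattering must
   satisfy [0 <= g < v] on the shattered set (take J = I and J = empty).  Among
   finitely many shattered points, the at most 2d points minimising or
   maximising some coordinate span them: every box containing these points
   contains all of them.  The function realising the complement J of these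
   points exceeds [g >= 0] on them, so its box contains them, hence every
   point; it then equals [v > g] on J, so J has no point left. *)

Set Implicit Arguments. Unset Strict Implicit. Unset Printing Implicit Defensive.
Import Order.TTheory GRing.Theory Num.Theory.
Local Open Scope classical_set_scope.
Local Open Scope ring_scope.

Lemma set_enum_of_bounded_uniq (T : choiceType) (A : set T) (n : nat) :
  (forall s : seq T, uniq s -> [set` s] `<=` A -> (size s <= n)%N) ->
  exists s : seq T, [/\ uniq s, A = [set` s] & (size s <= n)%N].
Proof.
move=> size_le.
have /finite_seqP [s A_s] : finite_set A.
  apply: contrapT => /(infinite_set_fset n.+1) [B BA].
  by rewrite ltnNge size_le // fset_uniq.
have eq_undup : [set` undup s] = [set` s].
  by apply/seteqP; split => x /=; rewrite mem_undup.
exists (undup s); rewrite A_s eq_undup undup_uniq; split => //.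
by rewrite size_le ?undup_uniq // A_s eq_undup.
Qed.

Lemma seq_argmin (T : eqType) disp (X : orderType disp) (f : T -> X)
    (x : T) (s : seq T) :
  exists2 a, a \in x :: s & forall y, y \in x :: s -> (f a <= f y)%O.
Proof.
elim: s x => [|z s IHs] x.
  by exists x => [|y]; rewrite ?inE // => /eqP ->.
have [a a_in a_min] := IHs z.
have [fxa | fax] := leP (f x) (f a).
- exists x => [|y]; first by rewrite inE eqxx.
  by rewrite inE => /predU1P [-> // | /a_min]; apply: le_trans.
- exists a => [|y]; first by rewrite inE a_in orbT.
  by rewrite inE => /predU1P [-> | /a_min //]; apply: ltW.
Qed.

Section Boxes.
Variables (R : realType) (d : nat).

Lemma box_hull_subseq (s : seq (pt R d)) :
  exists2 K : seq (pt R d), (size K <= 2 * d)%N /\ {subset K <= s} &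
    forall c r, all (in_box c r) K -> all (in_box c r) s.
Proof.
case: s => [|y s]; first by exists [::].
have /fin_all_exists [lo lo_min] : forall i : 'I_d, exists a,
    a \in y :: s /\ forall x, x \in y :: s -> a ord0 i <= x ord0 i.
  by move=> i; have [a ? ?] := seq_argmin (fun p : pt R d => p ord0 i) y s; exists a.
have /fin_all_exists [hi hi_max] : forall i : 'I_d, exists a,
    a \in y :: s /\ forall x, x \in y :: s -> x ord0 i <= a ord0 i.
  move=> i; have [a ? a_max] := seq_argmin (fun p : pt R d => - p ord0 i) y s.
  by exists a; split => // x /a_max; rewrite lerN2.
exists (map lo (enum 'I_d) ++ map hi (enum 'I_d)).
  split; first by rewrite size_cat !size_map -enumT size_enum_ord addnn -mul2n.
  by move=> x; rewrite mem_cat => /orP [] /mapP [i _ ->];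
    [exact: (lo_min i).1 | exact: (hi_max i).1].
move=> c r /allP K_in; apply/allP => x x_in; apply/forallP => i.
have /K_in /forallP /(_ i) /andP [c_lo _] : lo i \in map lo (enum 'I_d) ++ map hi (enum 'I_d).
  by rewrite mem_cat map_f ?mem_enum.
have /K_in /forallP /(_ i) /andP [_ hi_cr] : hi i \in map lo (enum 'I_d) ++ map hi (enum 'I_d).
  by rewrite mem_cat map_f ?mem_enum ?orbT.
rewrite (le_trans c_lo) ?(lo_min i).2 //.
exact: le_lt_trans ((hi_max i).2 x x_in) hi_cr.
Qed.

Definition masked_box (v : pt R d -> R) (c r : pt R d) : pt R d -> R :=
  fun p => if in_box c r p then v p else 0.

Section MaskedBoxClass.
Variables (v : pt R d -> R) (H : set (pt R d -> R)).
Hypothesis H_masked : forall h, H h -> exists c r, h = masked_box v c r.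
Hypothesis v_ge0 : forall p, unit_cube p -> 0 <= v p.

Lemma masked_box_ge0 c r p : unit_cube p -> 0 <= masked_box v c r p.
Proof. by rewrite /masked_box; case: ifP => // _ /v_ge0. Qed.

Lemma masked_box_le c r p : unit_cube p -> masked_box v c r p <= v p.
Proof. by rewrite /masked_box; case: ifP => // _ /v_ge0. Qed.

Section Shattered.
Variables (I : set (pt R d)) (g : pt R d -> R).
Hypothesis I_cube : I `<=` @unit_cube R d.
Hypothesis g_shatters : forall J, J `<=` I ->
  exists2 h, H h & (forall x, J x -> h x <= g x) /\
                   (forall x, (I `\` J) x -> g x < h x).

Lemma shattering_witness_ge0 x : I x -> 0 <= g x.
Proof.
move=> Ix; have [h /H_masked [c [r ->]] [h_le _]] := g_shatters (@subset_refl _ I).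
exact: le_trans (masked_box_ge0 c r (I_cube Ix)) (h_le x Ix).
Qed.

Lemma shattering_witness_lt x : I x -> g x < v x.
Proof.
move=> Ix; have [h /H_masked [c [r ->]] [_ h_gt]] := g_shatters (sub0set I).
exact: lt_le_trans (h_gt x (conj Ix id)) (masked_box_le c r (I_cube Ix)).
Qed.

Lemma shattered_uniq_size s : uniq s -> [set` s] `<=` I -> (size s <= 2 * d)%N.
Proof.
move=> s_uniq sI; have [K [K_size Ks] K_hull] := box_hull_subseq s.
have JI : [set x | I x /\ x \notin K] `<=` I by move=> x [].
have [h /H_masked [c [r ->]] [h_le h_gt]] := g_shatters JI.
have /K_hull /allP s_box : all (in_box c r) K.
  apply/allP => x xK; have Ix : I x by apply/sI/Ks.
  have := h_gt x (conj Ix (fun Jx => negP (proj2 Jx) xK)).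
  by rewrite /masked_box; case: ifP => // _; rewrite ltNge shattering_witness_ge0.
have sK : {subset s <= K}.
  move=> x xs; apply/negPn/negP => xK; have Ix : I x by apply: sI.
  have := h_le x (conj Ix xK); rewrite /masked_box s_box //.
  by rewrite leNgt shattering_witness_lt.
exact: leq_trans (uniq_leq_size s_uniq sK) K_size.
Qed.

End Shattered.

Lemma masked_box_pseudo_dim_le : pseudo_dim_le H (2 * d)%N.
Proof.
move=> I I_cube _ [g g_shatters]; apply: set_enum_of_bounded_uniq => s s_uniq sI.
exact: (shattered_uniq_size I_cube g_shatters s_uniq sI).
Qed.

End MaskedBoxClass.
End Boxes.

Theorem lemmaA12 (R : realType) (d : nat) (hd : (0 < d)%N) (star : 'I_d) :
  @pseudo_dim_le R d (@HS R d star) (2 * d) /\ @pseudo_dim_le R d (@HC R d) (2 * d).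
Proof.
split.
- apply: (@masked_box_pseudo_dim_le R d (fun p => p ord0 star)).
    by move=> h [c [r [_ [_ ->]]]]; exists c, r.
  by move=> p /(_ star) /andP [].
- apply: (@masked_box_pseudo_dim_le R d (fun _ => 1)) => // h.
  by move=> [c [r [_ [_ ->]]]]; exists c, r.
Qed.
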